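(* Let $B$ be a monoid, let $r\ge1$, let $A=B\langle x_0,\dots,x_r\rangle$ and $X=\operatorname{MProj}(A)$. Then for every integer $n$, $\Gamma(X,\mathcal{O}_X(n))=A_n$.
   Context: A monoid is a commutative associative monoid with identity $1$ and absorbing element $0$. $B\langle x_0,\dots,x_r\rangle$ is the graded monoid with $A_0=B$ and $A_n=\{b\,x_0^{i_0}\cdots x_r^{i_r}: b\in B,\ i_j\ge0,\ i_0+\dots+i_r=n\}$ (so each $x_i$ has degree $1$, and $A_n$ contains only the zero element for $n<0$), with multiplication $(b x^{i})(b' x^{j})=bb'x^{i+j}$ (multi-index notation). For homogeneous $f$, $A_f$ is the localization at $\{1,f,f^2,\dots\}$, graded by $\deg(a/f^k)=\deg a-k\deg f$, and $A_{(f)}$ is its degree-$0$ part. $X=\operatorname{MProj}(A)$ is the set of prime ideals of $A$ not containing $A_{\ge1}$, with the Zariski topology, covered by the opens $D_+(x_i)\cong\operatorname{MSpec}(A_{(x_i)})$, with $\mathcal O_X|_{D_+(f)}\cong\widetilde{A_{(f)}}$. $A(n)$ is the graded $A$-module with $A(n)_i=A_{i+n}$ and $\mathcal{O}_X(n)$ is the sheaf $\widetilde{A(n)}$ whose sections on $D_+(f)$ are the degree-$0$ elements of the localization $A(n)_f$, i.e. the degree-$n$ elements of $A_f$. The equality identifies $a\in A_n$ with the global section given by $a/1$ on each $D_+(x_i)$. *)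

From mathcomp Require Import all_boot all_order all_algebra.
Set Implicit Arguments. Unset Strict Implicit. Unset Printing Implicit Defensive.
Import GRing.Theory Num.Theory.

Record monoid0 := Monoid0 {
  mcar :> Type;
  mmul : mcar -> mcar -> mcar;
  mone : mcar;
  mzero : mcar;
  mmulA : forall a b c, mmul a (mmul b c) = mmul (mmul a b) c;
  mmulC : forall a b, mmul a b = mmul b a;
  mmul1 : forall a, mmul mone a = a;
  mmul0 : forall a, mmul mzero a = mzero
}.

Section PolyMonoid.
Variables (B : monoid0) (r : nat).

(** Elements of A = B<x_0,...,x_r>: [None] is the zero element, and
    [Some (b, e)] is b x_0^(e 0) ... x_r^(e r).  Equality in A is [A_eq]
    (all b x^e with b = 0 are identified with 0). *)
Definition Aelt := option (mcar B * ('I_r.+1 -> nat)).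

Definition A_eq (a a' : Aelt) : Prop :=
  match a, a' with
  | None, None => True
  | None, Some (b, _) => b = mzero B
  | Some (b, _), None => b = mzero B
  | Some (b, e), Some (b', e') =>
      (b = b' /\ forall j, e j = e' j) \/ (b = mzero B /\ b' = mzero B)
  end.

Definition A_mul (a a' : Aelt) : Aelt :=
  match a, a' with
  | Some (b, e), Some (b', e') => Some (mmul b b', fun j => (e j + e' j)%N)
  | _, _ => None
  end.

Definition A_one : Aelt := Some (mone B, fun _ => 0%N).

Definition A_pow (a : Aelt) (k : nat) : Aelt := iter k (A_mul a) A_one.

Definition var (i : 'I_r.+1) : Aelt :=
  Some (mone B, fun j => if j == i then 1%N else 0%N).

(** a \in A_n  (n an integer; for n < 0 only the zero element) *)
Definition in_deg (n : int) (a : Aelt) : Prop :=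
  match a with
  | None => True
  | Some (b, e) => b = mzero B \/ (Posz (\sum_j e j)%N = n)
  end.

(** Localization A_f: a fraction (a, k) stands for a / f^k. *)
Definition lfrac := (Aelt * nat)%type.

Definition loc_eq (f : Aelt) (s s' : lfrac) : Prop :=
  exists m : nat,
    A_eq (A_mul (A_pow f (m + s'.2)) s.1) (A_mul (A_pow f (m + s.2)) s'.1).

(** s is a degree-n element of A_f, where f is homogeneous of degree d:
    deg(a / f^k) = deg a - k d. *)
Definition loc_deg (f : Aelt) (d : nat) (n : int) (s : lfrac) : Prop :=
  exists (a : Aelt) (k : nat), loc_eq f s (a, k) /\ in_deg (n + Posz (k * d)%N)%R a.

(** Localization map A_f -> A_{fg}: a / f^k |-> a g^k / (fg)^k. *)
Definition loc_res (g : Aelt) (s : lfrac) : lfrac := (A_mul s.1 (A_pow g s.2), s.2).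

(** Global sections of O_X(n) on X = MProj(A), computed through the open
    cover D_+(x_i) (sections: degree-n elements of A_{x_i}), whose pairwise
    intersections are D_+(x_i x_j) (sections: degree-n elements of
    A_{x_i x_j}). *)
Definition global_section (n : int) (s : 'I_r.+1 -> lfrac) : Prop :=
  (forall i, loc_deg (var i) 1 n (s i)) /\
  (forall i j, loc_eq (A_mul (var i) (var j))
                      (loc_res (var j) (s i)) (loc_res (var i) (s j))).

Definition section_eq (s s' : 'I_r.+1 -> lfrac) : Prop :=
  forall i, loc_eq (var i) (s i) (s' i).

Definition section_of (a : Aelt) : 'I_r.+1 -> lfrac := fun _ => (a, 0%N).

End PolyMonoid.

From mathcomp Require Import all_boot all_order all_algebra zify.
From Stdlib Require Import Classical.
Set Implicit Arguments. Unset Strict Implicit. Unset Printing Implicit Defensive.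
Import GRing.Theory.

(** A degree-n section over D_+(x_i) is a monomial b x^(e_i) / x_i^(k_i), and
    the x_i are cancellable, so compatibility over D_+(x_i x_j) says exactly
    that e_i + k_j d_j = e_j + k_i d_i, with d_i the i-th unit vector.  Hence
    e := e_i - k_i d_i does not depend on i; its i-th coordinate is also that of
    e_j for any j <> i (which exists because r >= 1), so e has no negative entry
    and the section is b x^e with |e| = n.  Injectivity is cancellation of x_0. *)

Lemma common_exponent (I : eqType) (i0 j0 : I) (E : I -> I -> nat) (k : I -> nat) :
  i0 != j0 ->
  (forall i j t, E i t + (if t == j then k j else 0) =
                 E j t + (if t == i then k i else 0))%N ->
  exists e : I -> nat, forall i t, E i t = (e t + if t == i then k i else 0)%N.
Proof.
move=> ni0j0 compat.
(* The second index keeps the subtraction below from being truncated. *)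
have k_le : (k i0 <= E i0 i0)%N.
  by have := compat i0 j0 i0; rewrite eqxx (negbTE ni0j0); lia.
exists (fun t => E i0 t - if t == i0 then k i0 else 0)%N => i t /=.
have := compat i0 i t.
by case: (eqVneq t i0) => [->|_]; rewrite ?eqxx; case: (_ == i); lia.
Qed.

Section GlobalSections.
Variables (B : monoid0) (r : nat).
Implicit Types (a : Aelt B r) (s : lfrac B r) (u : 'I_r.+1 -> nat) (i j : 'I_r.+1).

Definition coef a : B := if a is Some (b, _) then b else mzero B.
Definition expo a (t : 'I_r.+1) : nat := if a is Some (_, e) then e t else 0%N.
Definition adeg a : nat := \sum_t expo a t.
Definition monomial u : Aelt B r := Some (mone B, u).
Definition delta i (t : 'I_r.+1) : nat := if t == i then 1%N else 0%N.

Lemma varE i : var B i = monomial (delta i).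
Proof. by []. Qed.

Lemma sum_pred1_nat i k : (\sum_t (if t == i then k else 0))%N = k.
Proof. by rewrite -big_mkcond big_pred1_eq. Qed.

Lemma coef_mul a a' : coef (A_mul a a') = mmul (coef a) (coef a').
Proof.
by case: a => [[b e]|]; case: a' => [[b' e']|] //=; rewrite ?mmul0 // mmulC mmul0.
Qed.

Lemma expo_mul a a' t : coef (A_mul a a') <> mzero B ->
  expo (A_mul a a') t = (expo a t + expo a' t)%N.
Proof. by case: a => [[b e]|]; case: a' => [[b' e']|]. Qed.

Lemma A_eq_refl a : A_eq a a.
Proof. by case: a => [[b e]|] //=; left. Qed.

Lemma loc_eq_refl f s : loc_eq f s s.
Proof. by exists 0%N; apply: A_eq_refl. Qed.

Lemma A_eq_coef_expo a a' : coef a = coef a' ->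
  (coef a = mzero B \/ forall t, expo a t = expo a' t) -> A_eq a a'.
Proof.
case: a => [[b e]|]; case: a' => [[b' e']|] //= <- //.
by case=> [b0|eq_e]; [right | left].
Qed.

Lemma A_eq_mul_monomial u u' a a' :
  A_eq (A_mul (monomial u) a) (A_mul (monomial u') a') <->
  coef a = coef a' /\
  (coef a = mzero B \/ forall t, (u t + expo a t = u' t + expo a' t)%N).
Proof.
case: a => [[b e]|]; case: a' => [[b' e']|] /=; rewrite ?mmul1.
- split=> [[[-> eq_e]|[-> ->]]|[-> [b0|eq_e]]].
  + by split; last right.
  + by split; last left.
  + by right.
  + by left.
- by split=> [b0|[]//]; split; last left.
- by split=> [b0|[]//]; split; last left.
- by split=> // _; split; last left.
Qed.

Lemma A_pow_monomial u k :
  exists2 e, A_pow (monomial u) k = monomial e & forall t, e t = (k * u t)%N.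
Proof.
elim: k => [|k [e pow_e e_def]]; first by exists (fun _ => 0%N).
exists (fun t => u t + e t)%N => [|t]; last by rewrite e_def mulSn.
have -> : A_pow (monomial u) k.+1 = A_mul (monomial u) (A_pow (monomial u) k) by [].
by rewrite pow_e /= mmul1.
Qed.

Lemma coef_pow_var i k : coef (A_pow (var B i) k) = mone B.
Proof. by have [e -> _] := A_pow_monomial (delta i) k. Qed.

Lemma expo_pow_var i k t : expo (A_pow (var B i) k) t = if t == i then k else 0%N.
Proof.
have [e -> e_def] := A_pow_monomial (delta i) k.
by rewrite /= e_def /delta; case: (t == i); rewrite ?muln1 ?muln0.
Qed.

Lemma A_mul_var i j :
  A_mul (var B i) (var B j) = monomial (fun t => delta i t + delta j t)%N.
Proof. by rewrite /= mmul1. Qed.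

Lemma loc_eq_monomialP u s s' :
  loc_eq (monomial u) s s' <->
  exists m, coef s.1 = coef s'.1 /\ (coef s.1 = mzero B \/
    forall t, ((m + s'.2) * u t + expo s.1 t = (m + s.2) * u t + expo s'.1 t)%N).
Proof.
split=> -[m] eq_ms; exists m;
  have [e pow_e e_def] := A_pow_monomial u (m + s'.2);
  have [e' pow_e' e'_def] := A_pow_monomial u (m + s.2).
- move: eq_ms; rewrite pow_e pow_e' => /A_eq_mul_monomial[eq_c [c0|eq_e]].
    by split; last left.
  by split=> //; right=> t; rewrite -e_def -e'_def.
- rewrite pow_e pow_e'; apply/A_eq_mul_monomial.
  case: eq_ms => eq_c [c0|eq_e]; first by split; last left.
  by split=> //; right=> t; rewrite e_def e'_def.
Qed.

Lemma loc_eq_monomial_inj u a a' :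
  loc_eq (monomial u) (a, 0%N) (a', 0%N) -> A_eq a a'.
Proof.
case/loc_eq_monomialP=> m [eq_c exps]; apply: A_eq_coef_expo eq_c _.
by case: exps => [|exps]; [left | right=> t; have := exps t; rewrite /=; lia].
Qed.

Lemma in_deg_adeg n a : in_deg n a -> coef a <> mzero B -> Posz (adeg a) = n.
Proof. by case: a => [[b e]|] //= []. Qed.

Lemma adeg_loc_monomial u d n s : (\sum_t u t)%N = d ->
  loc_deg (monomial u) d n s -> coef s.1 <> mzero B ->
  Posz (adeg s.1) = (n + Posz (s.2 * d)%N)%R.
Proof.
move=> sum_u [a [k [/loc_eq_monomialP[m [/= eq_c exps]] deg_a]]] c0.
case: exps => [//|exps].
have {deg_a} := in_deg_adeg deg_a; rewrite -eq_c => /(_ c0) deg_a.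
have : ((m + k) * d + adeg s.1 = (m + s.2) * d + adeg a)%N.
  rewrite -sum_u /adeg !big_distrr -!big_split.
  by apply: eq_bigr => t _; exact: exps.
lia.
Qed.

Lemma compatible_exponents i j s s' :
  loc_eq (A_mul (var B i) (var B j)) (loc_res (var B j) s) (loc_res (var B i) s') ->
  coef s.1 = coef s'.1 /\ (coef s.1 = mzero B \/ forall t,
    (expo s.1 t + (if t == j then s'.2 else 0) =
     expo s'.1 t + (if t == i then s.2 else 0))%N).
Proof.
have coef_res a l k : coef (A_mul a (A_pow (var B l) k)) = coef a.
  by rewrite coef_mul coef_pow_var mmulC mmul1.
rewrite A_mul_var => /loc_eq_monomialP[m [/=]]; rewrite !coef_res => eq_c exps.
split=> //; have [c0|c0] := classic (coef s.1 = mzero B); [by left | right=> t].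
case: exps => [//|/(_ t)].
rewrite !expo_mul ?coef_res -?eq_c // !expo_pow_var /delta.
by case: (t == i); case: (t == j); lia.
Qed.

Lemma section_of_global n a : in_deg n a -> global_section n (section_of a).
Proof.
move=> deg_a; split=> [i|i j]; last exact: loc_eq_refl.
by exists a, 0%N; split; [apply: loc_eq_refl | rewrite mul0n addr0].
Qed.

Lemma global_section_surj n (s : 'I_r.+1 -> lfrac B r) :
  (1 <= r)%N -> global_section n s ->
  exists a, in_deg n a /\ section_eq s (section_of a).
Proof.
move=> hr [deg_s compat_s].
have compat i j := compatible_exponents (compat_s i j).
have eq_c i j : coef (s i).1 = coef (s j).1 by case: (compat i j).
have [[i0 c0]|nz] := classic (exists i, coef (s i).1 = mzero B).
  exists None; split=> // i; rewrite varE; apply/loc_eq_monomialP.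
  by exists 0%N; rewrite (eq_c i i0) c0; split; last left.
have {}nz i : coef (s i).1 <> mzero B by move=> c0; apply: nz; exists i.
have exps_compat i j t : (expo (s i).1 t + (if t == j then (s j).2 else 0) =
                          expo (s j).1 t + (if t == i then (s i).2 else 0))%N.
  by case: (compat i j) => _ [c0|//]; case: (nz i).
have [e exps] := common_exponent (E := fun i => expo (s i).1)
  (k := fun i => (s i).2) (neq_lift ord0 (Ordinal hr)) exps_compat.
exists (Some (coef (s ord0).1, e)); split.
  right; have := adeg_loc_monomial (sum_pred1_nat ord0 1) (deg_s ord0) (nz ord0).
  rewrite /adeg (eq_bigr _ (fun t _ => exps ord0 t)) big_split /=.
  by rewrite sum_pred1_nat; lia.
move=> i; rewrite varE; apply/loc_eq_monomialP.
exists 0%N; split; first exact: eq_c.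
by right=> t; rewrite exps /delta /=; case: (t == i); lia.
Qed.

End GlobalSections.

Theorem mainTheorem6 (B : monoid0) (r : nat) (hr : (1 <= r)%N) (n : int) :
  (forall a : Aelt B r, in_deg n a -> global_section n (section_of a)) /\
  (forall s : 'I_r.+1 -> lfrac B r, global_section n s ->
     exists a : Aelt B r, in_deg n a /\ section_eq s (section_of a)) /\
  (forall a a' : Aelt B r, in_deg n a -> in_deg n a' ->
     section_eq (section_of a) (section_of a') -> A_eq a a').
Proof.
split; first exact: section_of_global.
split=> [s|a a' _ _ /(_ ord0)]; first exact: global_section_surj.
exact: loc_eq_monomial_inj.
Qed.
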